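(* Let $X,Y$ be strings over a binary alphabet, $\ell\ge1$, and $\mathcal{S}(\ell)$ an $\ell$-cover. Let $\mathcal{F}$ be the set of all strings occurring as a component of some pair in $\mathsf{Pairs}_\ell(X)\cup\mathsf{Pairs}_\ell(Y)$, and let $N_0(F),N_1(F)$ ($F\in\mathcal{F}$) be defined from a marking of light edges of $\mathcal{T}(\mathcal{F})$ in which every node has at most one outgoing non-light edge, as follows: $N_0(F)=\{F\}$ and $N_1(F)$ consists of $F$ and every string obtained from $F$ by choosing a light edge $(u,w)$ on the root-to-terminal path of $F$ and replacing $F[|u|+1]$ ($|u|$ the string depth of $u$) by the other letter. For $S\in\{X,Y\}$ and $d\in\{0,1\}$ let $$\mathsf{Pairs}^{(d)}_\ell(S)=\bigcup_{(U_1,U_2)\in\mathsf{Pairs}_\ell(S)}\ \bigcup_{d_1+d_2=d}\{(U_1',U_2') : U_1'\in N_{d_1}(U_1),\ U_2'\in N_{d_2}(U_2)\}.$$ If $\mathsf{LCF}_1(X,Y)\ge\ell$, then $$\mathsf{LCF}_1(X,Y)=\max_{k_1+k_2=1}\mathrm{maxPairLCP}(\mathsf{Pairs}^{(k_1)}_\ell(X),\mathsf{Pairs}^{(k_2)}_\ell(Y)).$$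
   Context: $U[i..j]$ denotes a factor, $U^R$ the reversal, $d_H$ the Hamming distance; $\mathsf{LCP}$ is the longest common prefix length; $\mathsf{LCP}_d(U,V)=\max\{p\le\min(|U|,|V|): d_H(U[1..p],V[1..p])\le d\}$. $\mathsf{LCF}_k(X,Y)$ is the maximum length of a factor of $X$ and a factor of $Y$ of equal length at Hamming distance at most $k$. A $d$-cover is a set $\mathcal{S}(d)\subseteq\mathbb{Z}_+$ with a function $h$, $0\le h(i,j)<d$, such that $i+h(i,j),j+h(i,j)\in\mathcal{S}(d)$ for all $i,j\in\mathbb{Z}_+$. $\mathsf{Pairs}_\ell(U)=\{((U[1..i-1])^R,U[i..|U|]) : i\in\mathcal{S}(\ell)\cap[1..|U|]\}$. $\mathrm{maxPairLCP}(\mathcal{P},\mathcal{Q})=\max\{\mathsf{LCP}(P_1,Q_1)+\mathsf{LCP}(P_2,Q_2):(P_1,P_2)\in\mathcal{P},(Q_1,Q_2)\in\mathcal{Q}\}$. $\mathcal{T}(\mathcal{F})$ is the compacted trie of $\mathcal{F}$ (root, branching and terminal nodes of the trie), string depth of a node = length of the string it represents. *)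

(* Strings over the binary alphabet are [seq bool];
   positions in the paper are 1-based, seq indices are 0-based. *)
From mathcomp Require Import all_boot.
Set Implicit Arguments. Unset Strict Implicit. Unset Printing Implicit Defensive.

Definition str := seq bool.

Fixpoint lcp (U V : str) : nat :=
  match U, V with
  | a :: U', b :: V' => if a == b then (lcp U' V').+1 else 0
  | _, _ => 0
  end.

Definition ham (U V : str) : nat := count (fun p => p.1 != p.2) (zip U V).

Definition LCF (k : nat) (X Y : str) : nat :=
  \max_(0 <= i < (size X).+1) \max_(0 <= j < (size Y).+1) \max_(0 <= l < (size X).+1)
    (if [&& i + l <= size X, j + l <= size Y &
           ham (take l (drop i X)) (take l (drop j Y)) <= k]
     then l else 0).

Definition is_cover (d : nat) (S : pred nat) (h : nat -> nat -> nat) : Prop :=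
  ~~ S 0 /\
  forall i j, 0 < i -> 0 < j -> [/\ h i j < d, S (i + h i j) & S (j + h i j)].

Definition Pairs (S : pred nat) (U : str) : seq (str * str) :=
  [seq (rev (take i.-1 U), drop i.-1 U) | i <- iota 1 (size U) & S i].

Definition components (P : seq (str * str)) : seq str :=
  flatten [seq [:: p.1; p.2] | p <- P].

(* compacted trie T(FF): nodes are the root, terminal nodes (elements of FF)
   and branching nodes (both extensions v0, v1 are prefixes of strings in FF) *)
Definition trie_node (FF : seq str) (v : str) : bool := has (prefix v) FF.

Definition cnode (FF : seq str) (v : str) : bool :=
  [|| v == [::], v \in FF |
      trie_node FF (rcons v false) && trie_node FF (rcons v true)].

Definition cedge (FF : seq str) (u w : str) : bool :=
  [&& cnode FF u, cnode FF w, trie_node FF w, prefix u w, size u < size w &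
      all (fun k => ~~ cnode FF (take k w)) (iota (size u).+1 (size w - (size u).+1))].

Definition light_marking (FF : seq str) (light : str -> str -> bool) : Prop :=
  forall u w1 w2, cedge FF u w1 -> cedge FF u w2 ->
    ~~ light u w1 -> ~~ light u w2 -> w1 = w2.

Definition flip_at (F : str) (p : nat) : str := set_nth false F p (~~ nth false F p).

(* N_1(F): F and flips of F[|u|+1] for light edges (u,w) on the root-to-terminal
   path of F (u = F[1..i], w = F[1..j], i < j <= |F|) *)
Definition N1 (FF : seq str) (light : str -> str -> bool) (F : str) : seq str :=
  F :: [seq flip_at F i | i <- iota 0 (size F) &
         has (fun j => cedge FF (take i F) (take j F) && light (take i F) (take j F))
             (iota i.+1 (size F - i))].

(* N_0(F) = {F};  N_1 as above (only d ∈ {0,1} are used) *)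
Definition Nd (FF : seq str) (light : str -> str -> bool) (d : nat) (F : str) : seq str :=
  if d is 0 then [:: F] else N1 FF light F.

Definition PairsD (FF : seq str) (light : str -> str -> bool) (d : nat)
    (S : pred nat) (U : str) : seq (str * str) :=
  flatten [seq flatten [seq [seq (a, b) | a <- Nd FF light d1 p.1,
                                          b <- Nd FF light (d - d1) p.2]
                       | d1 <- iota 0 d.+1]
          | p <- Pairs S U].

Definition maxPairLCP (P Q : seq (str * str)) : nat :=
  \max_(p <- P) \max_(q <- Q) (lcp p.1 q.1 + lcp p.2 q.2).

From mathcomp Require Import all_boot zify.
Set Implicit Arguments. Unset Strict Implicit. Unset Printing Implicit Defensive.

(* A pair of Pairs(X) at position i and one of Pairs(Y) at position j whose
   components have common prefixes of lengths l1 and l2 spell aligned windows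
   X[i-l1 .. i+l2) and Y[j-l1 .. j+l2); the Hamming distance of the windows
   is at most the total Hamming perturbation of the four components, which is
   at most 1 in Pairs^(k1) x Pairs^(k2) with k1 + k2 = 1.  So the right-hand
   side is at most LCF_1.
   Conversely, take a window of length l >= ell with at most one mismatch,
   starting at a in X and b in Y.  The cover gives a shift h < ell with
   a+h+1, b+h+1 in S, so the window splits at sampled positions into a left
   and a right part, one of them mismatch-free.  If the other one mismatches
   at depth m, the two strings of the trie branch at depth m; of the two edges
   leaving that branching node at least one is light, and flipping the
   corresponding string at depth m removes the mismatch within N_1. *)

Implicit Types (U V W A B F X Y : str) (FF : seq str) (S : pred nat).

Lemma leq_lcp n U V : (n <= lcp U V) = (n <= size U) && (take n U == take n V).
Proof.
elim: U V n => [|x U IH] [|y V] [|n] //=; first by rewrite andbF.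
by rewrite eqseq_cons; case: eqP => _; rewrite ?andbF // ltnS IH.
Qed.

Lemma lcpC U V : lcp U V = lcp V U.
Proof. by elim: U V => [|x U IH] [|y V] //=; rewrite eq_sym IH. Qed.

Lemma lcp_sizel U V : lcp U V <= size U.
Proof. by have := leqnn (lcp U V); rewrite leq_lcp => /andP[]. Qed.

Lemma lcp_sizer U V : lcp U V <= size V.
Proof. by rewrite lcpC lcp_sizel. Qed.

Lemma take_lcp n U V : n <= lcp U V -> take n U = take n V.
Proof. by rewrite leq_lcp => /andP[_ /eqP]. Qed.

Lemma ham_cons x y U V : ham (x :: U) (y :: V) = (x != y) + ham U V.
Proof. by []. Qed.

Lemma hamC U V : ham U V = ham V U.
Proof. by elim: U V => [|x U IH] [|y V] //; rewrite !ham_cons eq_sym IH. Qed.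

Lemma ham_take n U V : ham (take n U) (take n V) <= ham U V.
Proof.
elim: U V n => [|x U IH] [|y V] [|n] //=; by rewrite !ham_cons ?leq_add2l.
Qed.

Lemma ham_triangle U V W : size U = size V -> size V = size W ->
  ham U W <= ham U V + ham V W.
Proof.
elim: U V W => [|x U IH] [|y V] [|z W] //= [eUV] [eVW].
rewrite !ham_cons addnACA leq_add ?IH //.
by case: x y z => [] [] [].
Qed.

Lemma hamxx U : ham U U = 0.
Proof. by elim: U => //= x U IH; rewrite ham_cons eqxx IH. Qed.

Lemma ham_cat U1 U2 V1 V2 : size U1 = size V1 ->
  ham (U1 ++ U2) (V1 ++ V2) = ham U1 V1 + ham U2 V2.
Proof. by move=> e; rewrite /ham zip_cat // count_cat. Qed.

Lemma ham_rev U V : size U = size V -> ham (rev U) (rev V) = ham U V.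
Proof. by move=> e; rewrite /ham -rev_zip // count_rev. Qed.

Lemma ham_eq0 U V : size U = size V -> ham U V = 0 -> U = V.
Proof.
elim: U V => [|x U IH] [|y V] //= [e]; rewrite ham_cons.
by case: eqP => [-> /IH ->|].
Qed.

Lemma ham0_lcp n U V : n <= size U -> n <= size V ->
  ham (take n U) (take n V) = 0 -> n <= lcp U V.
Proof.
move=> le_nU le_nV /ham_eq0 eUV.
by rewrite leq_lcp le_nU eUV ?size_takel ?eqxx.
Qed.

Lemma flip_at0 x U : flip_at (x :: U) 0 = ~~ x :: U.
Proof. by []. Qed.

Lemma flip_atS x U m : flip_at (x :: U) m.+1 = x :: flip_at U m.
Proof. by []. Qed.

Lemma size_flip_at U m : m < size U -> size (flip_at U m) = size U.
Proof. by move=> lt_m; rewrite size_set_nth; apply/maxn_idPr. Qed.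

Lemma flip_atK U m : m < size U -> flip_at (flip_at U m) m = U.
Proof.
elim: U m => [|x U IH] [|m] // lt_m; first by rewrite flip_at0 flip_at0 negbK.
by rewrite !flip_atS IH.
Qed.

Lemma take_flip_at n U m : m < n -> take n (flip_at U m) = flip_at (take n U) m.
Proof.
elim: U n m => [|x U IH] [|n] [|m] // lt_mn.
- by rewrite take_oversize // size_ncons addn1.
- by rewrite flip_atS /= IH.
Qed.

Lemma take_flip_at_le n U m : n <= m < size U -> take n (flip_at U m) = take n U.
Proof.
elim: U n m => [|x U IH] [|n] [|m] //; first by rewrite ltn0 andbF.
by move=> lt_nmU; rewrite flip_atS /= IH.
Qed.

Lemma ham_flip_at U m : m < size U -> ham U (flip_at U m) = 1.
Proof.
elim: U m => [|x U IH] [|m] // lt_m.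
  by rewrite flip_at0 ham_cons hamxx addn0; case: (x).
by rewrite flip_atS ham_cons eqxx IH.
Qed.

Lemma ham1_flip_at U V : size U = size V -> ham U V = 1 ->
  exists2 m, m < size V & U = flip_at V m.
Proof.
elim: U V => [|x U IH] [|y V] //= [eUV]; rewrite ham_cons.
case: eqP => [-> /IH[//|m lt_m ->]|/eqP neq_xy [/(ham_eq0 eUV) ->]].
  by exists m.+1.
by exists 0; rewrite // flip_at0; case: x y neq_xy => [] [].
Qed.

(* The element of [Pairs] at the 1-based position i+1. *)
Definition split_at U i : str * str := (rev (take i U), drop i U).

Lemma size_split_at U i : i <= size U ->
  size (split_at U i).1 = i /\ size (split_at U i).2 = size U - i.
Proof. by move=> le_iU; rewrite /= size_rev size_takel ?size_drop. Qed.

Lemma window_split X i l1 l2 : l1 <= i <= size X ->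
  take (l1 + l2) (drop (i - l1) X) =
  rev (take l1 (split_at X i).1) ++ take l2 (split_at X i).2.
Proof.
case/andP=> le_l1i le_iX; rewrite takeD drop_drop take_drop subnKC //.
by rewrite /= take_rev revK size_takel.
Qed.

Lemma ham_window X Y i j l1 l2 : l1 <= i <= size X -> l1 <= j <= size Y ->
  ham (take (l1 + l2) (drop (i - l1) X)) (take (l1 + l2) (drop (j - l1) Y)) =
  ham (take l1 (split_at X i).1) (take l1 (split_at Y j).1) +
  ham (take l2 (split_at X i).2) (take l2 (split_at Y j).2).
Proof.
move=> le_iX le_jY.
have size_l1 Z n : l1 <= n <= size Z -> size (take l1 (split_at Z n).1) = l1.
  by case/andP=> le_l1n le_nZ; rewrite size_takel // size_rev size_takel.
by rewrite !window_split // ham_cat ?ham_rev ?size_rev ?size_l1.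
Qed.

Lemma leq_LCF k X Y i j l : i + l <= size X -> j + l <= size Y ->
  ham (take l (drop i X)) (take l (drop j Y)) <= k -> l <= LCF k X Y.
Proof.
move=> le_X le_Y le_k.
have mem_iota_leq n m : n <= m -> n \in index_iota 0 m.+1.
  by rewrite mem_index_iota.
apply: leq_trans (leq_bigmax_seq _ (mem_iota_leq i _ (leq_trans (leq_addr l i) le_X)) isT).
apply: leq_trans (leq_bigmax_seq _ (mem_iota_leq j _ (leq_trans (leq_addr l j) le_Y)) isT).
apply: leq_trans (leq_bigmax_seq _ (mem_iota_leq l _ (leq_trans (leq_addl i l) le_X)) isT).
by rewrite le_X le_Y le_k.
Qed.

Lemma LCF_leq k X Y R :
  (forall i j l, i + l <= size X -> j + l <= size Y ->
     ham (take l (drop i X)) (take l (drop j Y)) <= k -> l <= R) ->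
  LCF k X Y <= R.
Proof.
move=> ub; do 3![apply/bigmax_leqP_seq => ? _ _].
by case: ifP => // /and3P[]; apply: ub.
Qed.

Lemma ham_take_lcp l U V A B : l <= lcp A B -> size A = size U -> size B = size V ->
  ham (take l U) (take l V) <= ham U A + ham V B.
Proof.
move=> le_l eAU eBV; have eAB := take_lcp le_l.
rewrite (hamC V B); apply: leq_trans (@ham_triangle _ (take l A) _ _ _) _.
- by rewrite !size_take eAU.
- by rewrite eAB !size_take eBV.
by rewrite {2}eAB leq_add ?ham_take.
Qed.

Lemma lcp_le_LCF k X Y i j (A B : str * str) :
  i <= size X -> j <= size Y ->
  size A.1 = size (split_at X i).1 -> size A.2 = size (split_at X i).2 ->
  size B.1 = size (split_at Y j).1 -> size B.2 = size (split_at Y j).2 ->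
  ham (split_at X i).1 A.1 + ham (split_at X i).2 A.2 +
  (ham (split_at Y j).1 B.1 + ham (split_at Y j).2 B.2) <= k ->
  lcp A.1 B.1 + lcp A.2 B.2 <= LCF k X Y.
Proof.
move=> le_iX le_jY eA1 eA2 eB1 eB2 le_k.
have [sX1 sX2] := size_split_at le_iX; have [sY1 sY2] := size_split_at le_jY.
set l1 := lcp A.1 B.1; set l2 := lcp A.2 B.2.
have le_l1i : l1 <= i by rewrite -sX1 -eA1 lcp_sizel.
have le_l1j : l1 <= j by rewrite -sY1 -eB1 lcp_sizer.
have le_X : i + l2 <= size X by rewrite -leq_subRL // -sX2 -eA2 lcp_sizel.
have le_Y : j + l2 <= size Y by rewrite -leq_subRL // -sY2 -eB2 lcp_sizer.
apply: (@leq_LCF _ _ _ (i - l1) (j - l1)); rewrite ?addnA ?subnK //.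
rewrite ham_window ?le_l1i ?le_l1j //; apply: leq_trans le_k.
by rewrite addnACA leq_add // ham_take_lcp.
Qed.

Lemma mem_Pairs S U p : p \in Pairs S U -> exists2 i, i < size U & p = split_at U i.
Proof.
case/mapP=> -[|i]; rewrite mem_filter mem_iota ?andbF //.
by rewrite add1n ltnS => /andP[_ lt_iU] ->; exists i.
Qed.

Lemma split_at_Pairs S U i : i < size U -> S i.+1 -> split_at U i \in Pairs S U.
Proof. by move=> lt_iU Si; apply/mapP; exists i.+1; rewrite // mem_filter mem_iota Si. Qed.

Section Neighbourhoods.

Variables (FF : seq str) (light : str -> str -> bool).

Lemma N1_ham F F' : F' \in N1 FF light F -> size F' = size F /\ ham F F' <= 1.
Proof.
rewrite inE => /predU1P[->|/mapP[m]]; first by rewrite hamxx.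
by rewrite mem_filter mem_iota => /andP[_ lt_m] ->; rewrite size_flip_at ?ham_flip_at.
Qed.

Lemma Nd_ham d F F' : F' \in Nd FF light d F -> size F' = size F /\ ham F F' <= d.
Proof.
case: d => [|d] /=; first by rewrite inE => /eqP->; rewrite hamxx.
by case/N1_ham=> -> le1; split; last exact: leq_trans le1 _.
Qed.

Lemma mem_PairsD d S U p : p \in PairsD FF light d S U ->
  exists2 q, q \in Pairs S U &
    [/\ size p.1 = size q.1, size p.2 = size q.2 & ham q.1 p.1 + ham q.2 p.2 <= d].
Proof.
case/flatten_mapP=> q qP /flatten_mapP[d1]; rewrite mem_iota => /andP[_ le_d1].
case/allpairsP=> -[a b] [/= /Nd_ham[ea ha] /Nd_ham[eb hb] ->]; exists q => //.
by split=> //; rewrite -(subnKC (le_d1 : d1 <= d)) leq_add.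
Qed.

Lemma PairsD_mem d1 d2 S U p a b : p \in Pairs S U ->
  a \in Nd FF light d1 p.1 -> b \in Nd FF light d2 p.2 ->
  (a, b) \in PairsD FF light (d1 + d2) S U.
Proof.
move=> pP aN bN; apply/flatten_mapP; exists p => //; apply/flatten_mapP.
by exists d1; [rewrite mem_iota ltnS leq_addr | rewrite addKn; apply: allpairs_f].
Qed.

Lemma Pairs_PairsD0 S U p : p \in Pairs S U -> p \in PairsD FF light 0 S U.
Proof. by case: p => p1 p2 pP; apply: (PairsD_mem (d1 := 0) (d2 := 0)) pP _ _; rewrite ?inE. Qed.

Lemma PairsD1_l S U p F : p \in Pairs S U -> F \in N1 FF light p.1 ->
  (F, p.2) \in PairsD FF light 1 S U.
Proof. by move=> pP FN; apply: (PairsD_mem (d1 := 1) (d2 := 0)) pP FN _; rewrite ?inE. Qed.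

Lemma PairsD1_r S U p F : p \in Pairs S U -> F \in N1 FF light p.2 ->
  (p.1, F) \in PairsD FF light 1 S U.
Proof. by move=> pP FN; apply: (PairsD_mem (d1 := 0) (d2 := 1)) pP _ FN; rewrite ?inE. Qed.

End Neighbourhoods.

Lemma leq_maxPairLCP P Q p q : p \in P -> q \in Q ->
  lcp p.1 q.1 + lcp p.2 q.2 <= maxPairLCP P Q.
Proof.
move=> pP qQ; apply: leq_trans (leq_bigmax_seq _ pP isT).
exact: leq_trans (leq_bigmax_seq _ qQ isT).
Qed.

Lemma maxPairLCP_PairsD_le_LCF FF light d1 d2 S X Y :
  maxPairLCP (PairsD FF light d1 S X) (PairsD FF light d2 S Y) <= LCF (d1 + d2) X Y.
Proof.
apply/bigmax_leqP_seq=> p /mem_PairsD[_ /mem_Pairs[i lt_iX ->] [ep1 ep2 hp]] _.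
apply/bigmax_leqP_seq=> q /mem_PairsD[_ /mem_Pairs[j lt_jY ->] [eq1 eq2 hq]] _.
exact: (lcp_le_LCF (ltnW lt_iX) (ltnW lt_jY)) (leq_add hp hq).
Qed.

Lemma mem_components P p : p \in P -> p.1 \in components P /\ p.2 \in components P.
Proof. by move=> pP; split; apply/flatten_mapP; exists p; rewrite ?inE ?eqxx ?orbT. Qed.

Section Trie.

Variables (FF : seq str) (light : str -> str -> bool).

Lemma cnode_branch U V m : U \in FF -> V \in FF -> m < size U -> m < size V ->
  take m U = take m V -> nth false U m != nth false V m -> cnode FF (take m U).
Proof.
move=> UF VF lt_mU lt_mV eUV neq_m; apply/or3P/Or33.
have trie_rcons W : W \in FF -> m < size W ->
    trie_node FF (rcons (take m W) (nth false W m)).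
  by move=> WF lt_mW; apply/hasP; exists W; rewrite // -take_nth ?prefix_take.
have := trie_rcons _ UF lt_mU; have := trie_rcons _ VF lt_mV; rewrite -eUV.
by case: (nth _ U m) (nth _ V m) neq_m => [] [] // _ -> ->.
Qed.

Lemma cedge_below U m : U \in FF -> m < size U -> cnode FF (take m U) ->
  exists2 j, m < j <= size U & cedge FF (take m U) (take j U).
Proof.
move=> UF lt_mU cnode_m.
have ex_j : exists j, [&& m < j, j <= size U & cnode FF (take j U)].
  by exists (size U); rewrite lt_mU leqnn take_size /cnode UF orbT.
case: (ex_minnP ex_j) => j /and3P[lt_mj le_jU cnode_j] min_j.
exists j; first by rewrite lt_mj.
have le_mU := ltnW lt_mU.
rewrite /cedge cnode_m cnode_j prefixE !size_takel // take_takel ?(ltnW lt_mj) //.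
rewrite eqxx lt_mj /=; apply/andP; split.
  by apply/hasP; exists U; rewrite ?prefix_take.
apply/allP=> k; rewrite mem_iota subnKC // => /andP[lt_mk lt_kj].
rewrite take_takel ?(ltnW lt_kj) //; apply/negP=> cnode_k.
by have := min_j k; rewrite lt_mk cnode_k (leq_trans (ltnW lt_kj)) // leqNgt lt_kj => /(_ isT).
Qed.

Lemma flip_at_N1 F m j : m < j <= size F ->
  cedge FF (take m F) (take j F) -> light (take m F) (take j F) ->
  flip_at F m \in N1 FF light F.
Proof.
case/andP=> lt_mj le_jF edge_mj light_mj; rewrite inE; apply/orP; right.
have lt_mF := leq_trans lt_mj le_jF.
apply: map_f; rewrite mem_filter mem_iota lt_mF !andbT; apply/hasP; exists j.
  by rewrite mem_iota lt_mj addSn subnKC ?ltnS // ltnW.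
by rewrite edge_mj.
Qed.

Hypothesis marking : light_marking FF light.

Lemma branch_flip_N1 U V m : U \in FF -> V \in FF -> m < size U -> m < size V ->
  take m U = take m V -> nth false U m != nth false V m ->
  flip_at U m \in N1 FF light U \/ flip_at V m \in N1 FF light V.
Proof.
move=> UF VF lt_mU lt_mV eUV neq_m.
have cnode_U := cnode_branch UF VF lt_mU lt_mV eUV neq_m.
have cnode_V : cnode FF (take m V) by rewrite -eUV.
have [jU /andP[lt_mjU le_jU] edge_U] := cedge_below UF lt_mU cnode_U.
have [jV /andP[lt_mjV le_jV] edge_V] := cedge_below VF lt_mV cnode_V.
case light_U: (light (take m U) (take jU U)).
  by left; apply: (flip_at_N1 _ edge_U light_U); rewrite lt_mjU.
case light_V: (light (take m V) (take jV V)).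
  by right; apply: (flip_at_N1 _ edge_V light_V); rewrite lt_mjV.
rewrite -eUV in edge_V light_V.
(* two heavy edges out of the same node coincide, so U and V agree at depth m *)
have eUV_j := marking edge_U edge_V (negbT light_U) (negbT light_V).
by move: neq_m; rewrite -(nth_take _ lt_mjU) eUV_j nth_take ?eqxx.
Qed.

Lemma prefix_repair U V n : U \in FF -> V \in FF -> n <= size U -> n <= size V ->
  ham (take n U) (take n V) <= 1 ->
  (exists2 F, F \in N1 FF light U & n <= lcp F V) \/
  (exists2 F, F \in N1 FF light V & n <= lcp U F).
Proof.
move=> UF VF le_nU le_nV; rewrite leq_eqVlt ltnS leqn0 => /orP[/eqP ham1|/eqP ham0].
  have [|m lt_mV eflip] := ham1_flip_at _ ham1; first by rewrite !size_takel.
  have lt_mn : m < n by rewrite -(size_takel le_nV).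
  have lt_mU := leq_trans lt_mn le_nU.
  have eUV_m : take m U = take m V.
    rewrite -(take_takel U (ltnW lt_mn)) eflip take_flip_at_le ?leqnn //.
    exact: take_takel (ltnW lt_mn).
  have neq_m : nth false U m != nth false V m.
    rewrite -(nth_take _ lt_mn) eflip /flip_at nth_set_nth /= eqxx nth_take //.
    by case: (nth _ V m).
  have [UN|VN] := branch_flip_N1 UF VF lt_mU (leq_trans lt_mn le_nV)
    eUV_m neq_m.
    left; exists (flip_at U m) => //.
    by rewrite leq_lcp size_flip_at // le_nU take_flip_at // eflip flip_atK ?eqxx.
  right; exists (flip_at V m) => //.
  by rewrite leq_lcp le_nU take_flip_at // -eflip eqxx.
by left; exists U; rewrite ?inE ?eqxx ?ham0_lcp.
Qed.

End Trie.

Section Cover.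

Variables (X Y : str) (ell : nat) (S : pred nat) (h : nat -> nat -> nat).
Variable light : str -> str -> bool.
Hypothesis cover : is_cover ell S h.

Local Notation FF := (components (Pairs S X ++ Pairs S Y)).
Local Notation rhs :=
  (maxn (maxPairLCP (PairsD FF light 0 S X) (PairsD FF light 1 S Y))
        (maxPairLCP (PairsD FF light 1 S X) (PairsD FF light 0 S Y))).

Hypothesis marking : light_marking FF light.

Lemma pairs_le_rhs p q n1 n2 : p \in Pairs S X -> q \in Pairs S Y ->
  n1 <= size p.1 -> n1 <= size q.1 -> n2 <= size p.2 -> n2 <= size q.2 ->
  ham (take n1 p.1) (take n1 q.1) + ham (take n2 p.2) (take n2 q.2) <= 1 ->
  n1 + n2 <= rhs.
Proof.
move=> pP qP le_p1 le_q1 le_p2 le_q2 ham_le1.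
have [p1F p2F] : p.1 \in FF /\ p.2 \in FF by apply: mem_components; rewrite mem_cat pP.
have [q1F q2F] : q.1 \in FF /\ q.2 \in FF by apply: mem_components; rewrite mem_cat qP orbT.
rewrite leq_max.
have [[ham1_0 ham2_le1]|[ham2_0 ham1_le1]] :
    ham (take n1 p.1) (take n1 q.1) = 0 /\ ham (take n2 p.2) (take n2 q.2) <= 1 \/
    ham (take n2 p.2) (take n2 q.2) = 0 /\ ham (take n1 p.1) (take n1 q.1) <= 1.
- by move: ham_le1; lia.
- have lcp1 := ham0_lcp le_p1 le_q1 ham1_0.
  have [[F FN lcp2]|[F FN lcp2]] := prefix_repair marking p2F q2F le_p2 le_q2 ham2_le1.
  + apply/orP; right; apply: leq_trans (leq_maxPairLCP
      (PairsD1_r pP FN) (Pairs_PairsD0 _ _ qP)).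
    exact: leq_add.
  + apply/orP; left; apply: leq_trans (leq_maxPairLCP
      (Pairs_PairsD0 _ _ pP) (PairsD1_r qP FN)).
    exact: leq_add.
- have lcp2 := ham0_lcp le_p2 le_q2 ham2_0.
  have [[F FN lcp1]|[F FN lcp1]] := prefix_repair marking p1F q1F le_p1 le_q1 ham1_le1.
  + apply/orP; right; apply: leq_trans (leq_maxPairLCP
      (PairsD1_l pP FN) (Pairs_PairsD0 _ _ qP)).
    exact: leq_add.
  + apply/orP; left; apply: leq_trans (leq_maxPairLCP
      (Pairs_PairsD0 _ _ pP) (PairsD1_l qP FN)).
    exact: leq_add.
Qed.

Lemma window_le_rhs a b l : a + l <= size X -> b + l <= size Y ->
  ham (take l (drop a X)) (take l (drop b Y)) <= 1 -> ell <= l -> l <= rhs.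
Proof.
move=> le_X le_Y ham_le1 le_l.
have [_ /(_ a.+1 b.+1 isT isT)[lt_hh SX SY]] := cover.
set hh := h a.+1 b.+1 in lt_hh SX SY; rewrite addSn in SX SY.
have le_hhl : hh <= l := ltnW (leq_trans lt_hh le_l).
have lt_X : a + hh < size X by apply: leq_trans le_X; rewrite ltn_add2l (leq_trans lt_hh).
have lt_Y : b + hh < size Y by apply: leq_trans le_Y; rewrite ltn_add2l (leq_trans lt_hh).
have [sp1 sp2] := size_split_at (ltnW lt_X); have [sq1 sq2] := size_split_at (ltnW lt_Y).
have window_X : hh <= a + hh <= size X by rewrite leq_addl ltnW.
have window_Y : hh <= b + hh <= size Y by rewrite leq_addl ltnW.
have := @ham_window X Y _ _ hh (l - hh) window_X window_Y.
rewrite !addnK subnKC // => ham_split; rewrite ham_split in ham_le1.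
rewrite -(subnKC le_hhl); apply: (pairs_le_rhs (split_at_Pairs lt_X SX)
  (split_at_Pairs lt_Y SY) _ _ _ _ ham_le1).
- by rewrite sp1 leq_addl.
- by rewrite sq1 leq_addl.
- by rewrite sp2; lia.
- by rewrite sq2; lia.
Qed.

Lemma LCF1_le_max : LCF 1 X Y <= maxn rhs ell.-1.
Proof.
apply: LCF_leq => i j l le_X le_Y ham_le1; rewrite leq_max.
have [le_l|lt_l] := leqP ell l; first by rewrite (window_le_rhs le_X le_Y ham_le1 le_l).
by apply/orP; right; rewrite -ltnS (leq_trans lt_l) ?leqSpred.
Qed.

End Cover.

Theorem corollary6 (X Y : seq bool) (ell : nat) (S : pred nat)
    (h : nat -> nat -> nat) (light : seq bool -> seq bool -> bool) :
  1 <= ell ->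
  is_cover ell S h ->
  light_marking (components (cat (Pairs S X) (Pairs S Y))) light ->
  ell <= LCF 1 X Y ->
  let FF := components (cat (Pairs S X) (Pairs S Y)) in
  LCF 1 X Y =
    maxn (maxPairLCP (PairsD FF light 0 S X) (PairsD FF light 1 S Y))
         (maxPairLCP (PairsD FF light 1 S X) (PairsD FF light 0 S Y)).
Proof.
move=> ell_gt0 cover marking le_LCF FF; apply/eqP; rewrite eqn_leq geq_max.
rewrite (maxPairLCP_PairsD_le_LCF _ _ 0 1) (maxPairLCP_PairsD_le_LCF _ _ 1 0) !andbT.
have := LCF1_le_max cover marking; rewrite leq_max => /orP[//|].
by move/(leq_trans le_LCF); rewrite leqNgt ltn_predL ell_gt0.
Qed.
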